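(* Let $\mathcal{C}\le \mathbb{F}_q^n$ be a linear code with one-variable weight enumerator $W_\mathcal{C}(x)$ and homogeneous weight enumerator $W_\mathcal{C}(x,y)$. Then the stabilizer $\mathrm{Stab}_{\mathrm{GL}_2(\mathbb{C})}(W_\mathcal{C}(x,y))$ is finite if and only if $W_\mathcal{C}(x)$ has at least $3$ distinct roots in $\overline{\mathbb{Z}}$ (the algebraic integers; equivalently, at least $3$ distinct complex roots, since $W_\mathcal{C}(x)$ is a monic integer polynomial).
   Context: A linear code is a subspace $\mathcal{C}\le\mathbb{F}_q^n$; the weight $\mathrm{wt}(c)$ of $c\in\mathcal{C}$ is the number of nonzero coordinates. The one-variable weight enumerator is $W_\mathcal{C}(x)=\sum_{c\in\mathcal{C}}x^{n-\mathrm{wt}(c)}$ and the homogeneous weight enumerator is $W_\mathcal{C}(x,y)=\sum_{c\in\mathcal{C}}x^{n-\mathrm{wt}(c)}y^{\mathrm{wt}(c)}$. The group $\mathrm{GL}_2(\mathbb{C})$ acts on $\mathbb{C}[x,y]$ by $A\cdot p(x,y)=p(ax+by,cx+dy)$ for $A=\begin{pmatrix}a&b\\c&d\end{pmatrix}$, and $\mathrm{Stab}_{\mathrm{GL}_2(\mathbb{C})}(p)=\{A: A\cdot p=p\}$. *)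

From HB Require Import structures.
From mathcomp Require Import all_boot all_algebra all_field.
From mathcomp Require Import Rstruct.
From mathcomp Require Import complex.
From mathcomp Require Import mpoly.

Set Implicit Arguments.
Unset Strict Implicit.
Unset Printing Implicit Defensive.

Import GRing.Theory.
Local Open Scope ring_scope.

Definition CC := complex Rdefinitions.R.

Definition wt (F : finFieldType) (n : nat) (c : 'rV[F]_n) : nat :=
  #|[set i : 'I_n | c ord0 i != 0]|.

Definition wenum1 (R : nzRingType) (F : finFieldType) (n : nat)
  (C : {vspace 'rV[F]_n}) : {poly R} :=
  \sum_(c : 'rV[F]_n | c \in C) 'X^(n - wt c).

Definition wenum2 (R : nzRingType) (F : finFieldType) (n : nat)
  (C : {vspace 'rV[F]_n}) : {mpoly R[2]} :=
  \sum_(c : 'rV[F]_n | c \in C) ('X_0 ^+ (n - wt c) * 'X_1 ^+ (wt c)).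

Definition gl2_act (A : 'M[CC]_2) (p : {mpoly CC[2]}) : {mpoly CC[2]} :=
  p \mPo [tuple (A ord0 ord0) *: 'X_0 + (A ord0 ord_max) *: 'X_1;
                (A ord_max ord0) *: 'X_0 + (A ord_max ord_max) *: 'X_1].

Definition in_stab (p : {mpoly CC[2]}) (A : 'M[CC]_2) : Prop :=
  A \in unitmx /\ gl2_act A p = p.

Definition stab_finite (p : {mpoly CC[2]}) : Prop :=
  exists s : seq 'M[CC]_2, forall A, in_stab p A -> A \in s.

From HB Require Import structures.
From mathcomp Require Import all_boot all_algebra all_field.
From mathcomp Require Import Rstruct complex mpoly.
From mathcomp Require Import ring zify.
From Stdlib Require Import Classical.
Set Implicit Arguments. Unset Strict Implicit. Unset Printing Implicit Defensive.
Import GRing.Theory Num.Theory.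
Local Open Scope ring_scope.

(* Over C, W(x) = prod (x - r) over its roots r (with multiplicity), so
   W(x, y) = prod (x - r y), and A stabilises W(x, y) iff the substitution
   (x, y) |-> (a x + b y, c x + d y) fixes this split form. Such an A permutes
   the roots through its Moebius map z |-> (a z + b) / (c z + d). If there are
   three distinct roots, A is determined up to a scalar by their images (a
   Moebius map with three fixed points is the identity), and that scalar is an
   n-th root of unity: the stabiliser is finite. If all roots lie in a two-point
   set {a, b}, the substitutions scaling x - a y by lam and x - b y by mu, with
   lam ^ i * mu ^ j = 1, form an infinite family in the stabiliser. Finally the
   roots of the monic integral W(x) in algC are algebraic integers, and W(x)
   has three distinct roots in algC iff it has three in C, both meaning that
   its separable part W / gcd(W, W') has degree at least 3. *)

Lemma prodr_const_seq (R : pzSemiRingType) (T : Type) (s : seq T) (c : R) :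
  \prod_(r <- s) c = c ^+ size s.
Proof.
by rewrite big_const_seq count_predT; elim: (size s) => //= k ->; rewrite exprS.
Qed.

Lemma det_mx22 (R : comPzRingType) (A : 'M[R]_2) :
  \det A = A ord0 ord0 * A ord_max ord_max - A ord0 ord_max * A ord_max ord0.
Proof.
rewrite (expand_det_row _ ord0) !big_ord_recl big_ord0 addr0 /cofactor.
rewrite !det_mx11 !mxE /= expr0 expr1 mul1r mulN1r mulrN.
by congr (_ * _ - _ * _); congr (A _ _); apply/val_inj.
Qed.

Lemma ord2P (i : 'I_2) : i = ord0 \/ i = ord_max.
Proof. by case: i => -[|[|//]] Hi; [left|right]; apply/val_inj. Qed.

Section ThreeDistinct.
Variable T : eqType.

Definition three_distinct (P : pred T) := exists z1 z2 z3 : T,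
  [/\ [/\ P z1, P z2 & P z3] & [/\ z1 != z2, z1 != z3 & z2 != z3]].

Lemma eq_three_distinct (P Q : pred T) :
  P =1 Q -> three_distinct P <-> three_distinct Q.
Proof.
move=> PQ; split=> -[z1 [z2 [z3 [[P1 P2 P3] D]]]]; exists z1, z2, z3.
  by rewrite -!PQ.
by rewrite !PQ.
Qed.

End ThreeDistinct.

Lemma root_prod_XsubC_pred (R : idomainType) (rs : seq R) :
  root (\prod_(r <- rs) ('X - r%:P)) =1 [pred z in rs].
Proof. by move=> z; rewrite /= root_prod_XsubC. Qed.

Definition sep_part (R : fieldType) (p : {poly R}) := p %/ gcdp p p^`().

Lemma sep_part_eq0 (R : fieldType) (p : {poly R}) : (sep_part p == 0) = (p == 0).
Proof.
apply/eqP/eqP => [p0|->]; last by rewrite /sep_part div0p.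
by rewrite -(divpK (dvdp_gcdl p p^`())) -/(sep_part p) p0 mul0r.
Qed.

Lemma map_sep_part (K L : fieldType) (f : {rmorphism K -> L}) (p : {poly K}) :
  map_poly f (sep_part p) = sep_part (map_poly f p).
Proof. by rewrite /sep_part map_divp gcdp_map deriv_map. Qed.

Lemma root_sep_part (K : numFieldType) (p : {poly K}) (z : K) :
  p != 0 -> root (sep_part p) z = root p z.
Proof.
move=> p0; set g := gcdp p p^`().
have pE : sep_part p * g = p by rewrite divpK // dvdp_gcdl.
apply/idP/idP => [|pz]; first by rewrite -{2}pE rootM => ->.
apply: contraT => Nsz.
have [m [q Nqz pE']] := multiplicity_XsubC p z.
rewrite p0 /= in Nqz.
have m_gt0 : (0 < m)%N.
  by case: m pE' => // pE'; move: pz; rewrite pE' expr0 mulr1 (negPf Nqz).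
have mE : ('X - z%:P) ^+ m = ('X - z%:P) ^+ m.-1 * ('X - z%:P).
  by rewrite -exprSr prednK.
(* [z] has multiplicity exactly [m.-1] in [p^`()], since [q.[z] *+ m != 0]
   in characteristic 0. *)
have p'E : p^`() = ('X - z%:P) ^+ m.-1 * (q^`() * ('X - z%:P) + q *+ m).
  rewrite pE' derivM deriv_exp derivXsubC mul1r {1}mE [RHS]mulrDr.
  by rewrite mulrCA !mulrnAr [q * _]mulrC.
have coprime_sep : coprimep (('X - z%:P) ^+ m) (sep_part p).
  by apply: coprimep_expl; rewrite coprimep_sym coprimep_XsubC.
have : ('X - z%:P) ^+ m %| g.
  by rewrite -(Gauss_dvdpr g coprime_sep) pE pE' dvdp_mull.
move/dvdp_trans/(_ (dvdp_gcdr _ _)).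
rewrite p'E mE dvdp_mul2l ?expf_neq0 ?polyXsubC_eq0 // dvdp_XsubCl /root.
rewrite !hornerE subrr mulr0 add0r hornerMn mulrn_eq0 eqn0Ngt m_gt0 /=.
by rewrite -/(root q z) (negPf Nqz).
Qed.

Lemma poly_eq0_horner (K : numFieldType) (p : {poly K}) :
  (forall x, p.[x] = 0) -> p = 0.
Proof.
move=> p_eq0; apply: contraTeq isT => p_neq0.
set xs := [seq (i%:R : K) | i <- iota 0 (size p)].
have xs_uniq : uniq xs.
  by rewrite map_inj_uniq ?iota_uniq // => i j /eqP; rewrite eqr_nat => /eqP.
have xs_roots : all (root p) xs by apply/allP => x _; rewrite /root p_eq0.
have := max_poly_roots p_neq0 xs_roots xs_uniq.
by rewrite size_map size_iota ltnn.
Qed.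

Lemma three_distinct_map_ratr (K : numClosedFieldType) (q : {poly rat}) :
  q != 0 ->
  three_distinct (root (map_poly (ratr : rat -> K) q)) <->
  (3 < size (sep_part q))%N.
Proof.
move=> q0; set p := map_poly _ q.
have p0 : p != 0 by rewrite map_poly_eq0.
rewrite -(size_map_poly (ratr : {rmorphism rat -> K})) map_sep_part -/p.
split => [[z1 [z2 [z3 [[r1 r2 r3] [d12 d13 d23]]]]]|].
  have := @max_poly_roots _ (sep_part p) [:: z1; z2; z3].
  rewrite sep_part_eq0 p0 /= !root_sep_part // r1 r2 r3 !inE negb_or.
  by rewrite d12 d13 d23 => /(_ isT isT isT).
have [zs zsE] := closed_field_poly_normal (sep_part p).
have lc0 : lead_coef (sep_part p) != 0 by rewrite lead_coef_eq0 sep_part_eq0.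
have zs_uniq : uniq zs.
  rewrite -separable_prod_XsubC -(eqp_separable (eqp_scale _ lc0)) -zsE.
  exact: make_separable.
have zs_roots z : z \in zs -> root p z.
  by rewrite -root_sep_part // zsE rootZ // root_prod_XsubC.
rewrite zsE size_scale // size_prod_XsubC.
case: zs {zsE} zs_uniq zs_roots => [|z1 [|z2 [|z3 zs]]] //=.
rewrite !inE !negb_or => /and4P[/and3P[d12 d13 _] /andP[d23 _] _ _] zs_roots _.
exists z1, z2, z3; split; last by rewrite d12 d13 d23.
by split; apply: zs_roots; rewrite !inE eqxx ?orbT.
Qed.

Section SplitForm.
Variable K : fieldType.
Implicit Types (rs : seq K) (A B : 'M[K]_2) (g u v z : K).

Definition split_form rs u v := \prod_(r <- rs) (u - r * v).

Lemma split_formZ rs g u v :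
  split_form rs (g * u) (g * v) = g ^+ size rs * split_form rs u v.
Proof.
rewrite /split_form -prodr_const_seq -big_split.
by apply: eq_bigr => r _ /=; ring.
Qed.

Lemma split_form_v0 rs u : split_form rs u 0 = u ^+ size rs.
Proof.
by rewrite -prodr_const_seq; apply: eq_bigr => r _; rewrite mulr0 subr0.
Qed.

Definition stab_form rs A := \det A != 0 /\
  forall u v, split_form rs (A ord0 ord0 * u + A ord0 ord_max * v)
                            (A ord_max ord0 * u + A ord_max ord_max * v)
              = split_form rs u v.

Definition mobius A z :=
  (A ord0 ord0 * z + A ord0 ord_max) / (A ord_max ord0 * z + A ord_max ord_max).

Lemma stab_form_mobius rs A z : stab_form rs A -> z \in rs ->
  A ord_max ord0 * z + A ord_max ord_max != 0 /\ mobius A z \in rs.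
Proof.
move=> [detA stabA] zrs.
have := stabA z 1; rewrite !mulr1 [RHS](big_rem z) //= mulr1 subrr mul0r.
rewrite /mobius; set num := _ + A ord0 ord_max; set den := _ + A ord_max ord_max.
move=> form0; have den0 : den != 0.
  apply: contraNneq detA => den0; apply/eqP; rewrite det_mx22.
  move: form0; rewrite den0 split_form_v0 => /eqP; rewrite expf_eq0.
  move=> /andP[_ /eqP num0].
  have -> : A ord0 ord_max = - (A ord0 ord0 * z).
    by apply/eqP; rewrite -addr_eq0 addrC -/num num0.
  have -> : A ord_max ord_max = - (A ord_max ord0 * z).
    by apply/eqP; rewrite -addr_eq0 addrC -/den den0.
  ring.
split=> //; move/eqP: form0; rewrite prodf_seq_eq0 => /hasP[r rrs /=].
by rewrite subr_eq0 => /eqP->; rewrite mulfK.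
Qed.

Lemma stab_form_scalar rs B g : stab_form rs B -> stab_form rs (g *: B) ->
  g ^+ size rs = 1.
Proof.
move=> [_ /(_ 1 0)] + [_ /(_ 1 0)]; rewrite !mxE !mulr1 !mulr0 !addr0.
by rewrite split_formZ => -> /eqP; rewrite split_form_v0 expr1n mulr1 => /eqP.
Qed.

End SplitForm.

Lemma quadratic_eq0_of_roots (K : fieldType) (x y z w1 w2 w3 : K) :
  w1 != w2 -> w1 != w3 -> w2 != w3 ->
  x * w1 ^+ 2 + y * w1 + z = 0 -> x * w2 ^+ 2 + y * w2 + z = 0 ->
  x * w3 ^+ 2 + y * w3 + z = 0 -> [/\ x = 0, y = 0 & z = 0].
Proof.
move=> d12 d13 d23 r1 r2 r3.
have slope w w' : w != w' -> x * w ^+ 2 + y * w + z = 0 ->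
    x * w' ^+ 2 + y * w' + z = 0 -> x * (w + w') + y = 0.
  move=> dw rw rw'.
  have : (w - w') * (x * (w + w') + y) = 0.
    transitivity ((x * w ^+ 2 + y * w + z) - (x * w' ^+ 2 + y * w' + z)).
      by ring.
    by rewrite rw rw' subrr.
  by move/eqP; rewrite mulf_eq0 subr_eq0 (negPf dw) => /eqP.
have s12 := slope _ _ d12 r1 r2; have s13 := slope _ _ d13 r1 r3.
have : x * (w2 - w3) = 0.
  transitivity ((x * (w1 + w2) + y) - (x * (w1 + w3) + y)); first by ring.
  by rewrite s12 s13 subrr.
move/eqP; rewrite mulf_eq0 subr_eq0 (negPf d23) orbF => /eqP x0.
move: s12 r1; rewrite x0 !mul0r !add0r => ->.
by rewrite mul0r add0r.
Qed.

Lemma mobius_inj (K : fieldType) (A : 'M[K]_2) (w1 w2 : K) : \det A != 0 ->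
  A ord_max ord0 * w1 + A ord_max ord_max != 0 ->
  A ord_max ord0 * w2 + A ord_max ord_max != 0 ->
  mobius A w1 = mobius A w2 -> w1 = w2.
Proof.
rewrite det_mx22 /mobius => detA den1 den2 /eqP; rewrite eqr_div // => /eqP eq12.
set a := A ord0 ord0; set b := A ord0 ord_max; set c := A ord_max ord0.
set d := A ord_max ord_max.
have : (w1 - w2) * (a * d - b * c) = 0.
  transitivity ((a * w1 + b) * (c * w2 + d) - (a * w2 + b) * (c * w1 + d)).
    by ring.
  by rewrite eq12 subrr.
by move/eqP; rewrite mulf_eq0 (negPf detA) orbF subr_eq0 => /eqP.
Qed.

Section MobiusRigidity.
Variable K : fieldType.
Variables A B : 'M[K]_2.
Hypothesis detB : \det B != 0.

Local Notation a := (A ord0 ord0).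
Local Notation b := (A ord0 ord_max).
Local Notation c := (A ord_max ord0).
Local Notation d := (A ord_max ord_max).
Local Notation a' := (B ord0 ord0).
Local Notation b' := (B ord0 ord_max).
Local Notation c' := (B ord_max ord0).
Local Notation d' := (B ord_max ord_max).

(* [[p, q], [r, s]] is [A *m \adj B], whose Moebius map fixes [mobius B z]
   whenever [A] and [B] agree at [z]. *)
Local Notation p := (a * d' - b * c').
Local Notation q := (b * a' - a * b').
Local Notation r := (c * d' - d * c').
Local Notation s := (d * a' - c * b').

Definition mobius_agree (z : K) :=
  [/\ c * z + d != 0, c' * z + d' != 0 & mobius A z = mobius B z].

Lemma mobius_agree_fixed z : mobius_agree z ->
  r * mobius B z ^+ 2 + (s - p) * mobius B z + - q = 0.
Proof.
case=> denA denB eqAB; set w := mobius B z.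
have wB : (c' * z + d') * w = a' * z + b' by rewrite /w /mobius mulrC divfK.
have wA : (c * z + d) * w = a * z + b by rewrite /w -eqAB /mobius mulrC divfK.
apply: (mulfI denB); rewrite mulr0.
have -> : (c' * z + d') * (r * w ^+ 2 + (s - p) * w + - q) =
  (r * ((c' * z + d') * w) + s * (c' * z + d')) * w
  - (p * ((c' * z + d') * w) + q * (c' * z + d')) by ring.
rewrite wB; apply/eqP; rewrite subr_eq; apply/eqP.
transitivity ((a' * d' - b' * c') * ((c * z + d) * w)); first ring.
by rewrite wA; ring.
Qed.

Lemma mobius_rigid z1 z2 z3 : z1 != z2 -> z1 != z3 -> z2 != z3 ->
  mobius_agree z1 -> mobius_agree z2 -> mobius_agree z3 ->
  exists g, A = g *: B.
Proof.
move=> d12 d13 d23 ag1 ag2 ag3.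
have mobius_neq zi zj : mobius_agree zi -> mobius_agree zj -> zi != zj ->
    mobius B zi != mobius B zj.
  by move=> [_ deni _] [_ denj _]; apply: contra => /eqP/mobius_inj ->.
have [r0 /eqP] := quadratic_eq0_of_roots (mobius_neq _ _ ag1 ag2 d12)
  (mobius_neq _ _ ag1 ag3 d13) (mobius_neq _ _ ag2 ag3 d23)
  (mobius_agree_fixed ag1) (mobius_agree_fixed ag2) (mobius_agree_fixed ag3).
rewrite subr_eq0 => /eqP sp /eqP; rewrite oppr_eq0 => /eqP q0.
have := detB; rewrite det_mx22 => detB0.
exists (p / (a' * d' - b' * c')); apply/matrixP => i j; rewrite mxE mulrAC.
apply: (canRL (mulfK detB0)).
case: (ord2P i) => ->; case: (ord2P j) => ->.
- by transitivity (p * a' + q * c'); [ring | rewrite q0 mul0r addr0].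
- by transitivity (p * b' + q * d'); [ring | rewrite q0 mul0r addr0].
- by transitivity (r * a' + s * c'); [ring | rewrite r0 sp mul0r add0r].
- by transitivity (r * b' + s * d'); [ring | rewrite r0 sp mul0r add0r].
Qed.

End MobiusRigidity.

Lemma finite_fibers (T U : eqType) (P : T -> Prop) (f : T -> U) (ys : seq U) :
  (forall x, P x -> f x \in ys) ->
  (forall y, exists xs : seq T, forall x, P x -> f x = y -> x \in xs) ->
  exists xs : seq T, forall x, P x -> x \in xs.
Proof.
elim: ys P => [|y ys IH] P Pf fibers; first by exists [::] => x /Pf.
have [xs1 xs1P] := fibers y.
have [xs2 xs2P] : exists xs : seq T, forall x, P x /\ f x != y -> x \in xs.
  apply: IH => [x [Px fx]|y']; first by move: (Pf x Px); rewrite inE (negPf fx).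
  by have [xs xsP] := fibers y'; exists xs => x [Px _]; apply: xsP.
exists (xs1 ++ xs2) => x Px; rewrite mem_cat.
by have [fx|fx] := eqVneq (f x) y; [rewrite xs1P | rewrite xs2P ?orbT].
Qed.

Lemma roots_of_unity_seq (K : closedFieldType) (N : nat) : (0 < N)%N ->
  exists us : seq K, forall g, g ^+ N = 1 -> g \in us.
Proof.
move=> N_gt0; have [us usE] := closed_field_poly_normal ('X^N - 1%:P : {poly K}).
exists us => g gN; rewrite -root_prod_XsubC -(scale1r (\prod_(_ <- _) _)).
by rewrite -(monicP (monicXnsubC 1 N_gt0)) -usE /root !hornerE gN subrr.
Qed.

Lemma stab_form_finite (K : closedFieldType) (rs : seq K) :
  three_distinct [pred z in rs] ->
  exists Ms : seq 'M[K]_2, forall A, stab_form rs A -> A \in Ms.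
Proof.
move=> [z1 [z2 [z3 [[/= r1 r2 r3] [d12 d13 d23]]]]].
have [us usP] : exists us : seq K, forall g, g ^+ size rs = 1 -> g \in us.
  by apply: roots_of_unity_seq; case: rs r1 {r2 r3}.
pose key A := (mobius A z1, mobius A z2, mobius A z3).
apply: (@finite_fibers _ _ (stab_form rs) key
  [seq (xy, w) | xy <- [seq (x, y) | x <- rs, y <- rs], w <- rs]).
  move=> A sA; have [_ m1] := stab_form_mobius sA r1.
  have [_ m2] := stab_form_mobius sA r2; have [_ m3] := stab_form_mobius sA r3.
  by rewrite allpairs_f // allpairs_f.
move=> y.
have [[B [sB <-]]|none] := classic (exists B, stab_form rs B /\ key B = y).
  exists [seq g *: B | g <- us] => A sA [e1 e2 e3].
  have agree z : z \in rs -> mobius A z = mobius B z -> mobius_agree A B z.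
    move=> zrs eAB; have [denA _] := stab_form_mobius sA zrs.
    by have [denB _] := stab_form_mobius sB zrs.
  have [g AgB] := mobius_rigid sB.1 d12 d13 d23 (agree _ r1 e1) (agree _ r2 e2)
    (agree _ r3 e3).
  rewrite AgB in sA *; apply: map_f; apply: usP.
  exact: stab_form_scalar sB sA.
by exists [::] => A sA keyA; case: none; exists A.
Qed.

Definition mx22 (R : Type) (x00 x01 x10 x11 : R) : 'M[R]_2 :=
  \matrix_(i, j) if val i == 0%N then (if val j == 0%N then x00 else x01)
                 else (if val j == 0%N then x10 else x11).

Section EigenMatrix.
Variable K : fieldType.
Variables (a b lam mu : K).
Hypothesis ab : a != b.

(* The substitution of [eigen_mx] maps [x - a y] to [lam (x - a y)] and
   [x - b y] to [mu (x - b y)]. *)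
Definition eigen_mx : 'M[K]_2 :=
  let c := (lam - mu) / (b - a) in let d := (mu * b - lam * a) / (b - a) in
  mx22 (lam + a * c) (a * (d - lam)) c d.

Let ba : b - a != 0. Proof. by rewrite subr_eq0 eq_sym. Qed.

Lemma det_eigen_mx : \det eigen_mx = lam * mu.
Proof. by rewrite det_mx22 !mxE /=; field. Qed.

Lemma eigen_mx_mu : eigen_mx ord0 ord0 - b * eigen_mx ord_max ord0 = mu.
Proof. by rewrite !mxE /=; field. Qed.

Lemma split_form_eigen_mx rs u v : all [pred r | (r == a) || (r == b)] rs ->
  split_form rs (eigen_mx ord0 ord0 * u + eigen_mx ord0 ord_max * v)
                (eigen_mx ord_max ord0 * u + eigen_mx ord_max ord_max * v) =
  lam ^+ count (pred1 a) rs * mu ^+ count (predC1 a) rs * split_form rs u v.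
Proof.
elim: rs => [|r rs IH]; first by rewrite /split_form !big_nil !expr0 !mulr1.
rewrite /= => /andP[/orP[]/eqP-> /IH]; rewrite /split_form !big_cons => ->.
  by rewrite eqxx /= exprS !mxE /=; field.
by rewrite eq_sym (negPf ab) /= exprS !mxE /=; field.
Qed.

End EigenMatrix.

Lemma eigen_family_infinite (K : numFieldType) (rs : seq K) (a b : K) : a != b ->
  all [pred r | (r == a) || (r == b)] rs -> (a \in rs) || nilp rs ->
  ~ exists Ms : seq 'M[K]_2, forall A, stab_form rs A -> A \in Ms.
Proof.
move=> ab rs_ab a_rs [Ms MsP].
set i := count (pred1 a) rs; set j := count (predC1 a) rs.
set i1 := maxn 1 i; have i1_gt0 : (0 < i1)%N by rewrite leq_max.
pose t k : K := k.+1%:R; have t_neq0 k : t k != 0 by rewrite pnatr_eq0.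
(* [i1 = maxn 1 i] keeps [t k ^- i1] injective in [k], and still
   [lam ^+ i * mu ^+ j = 1] since either [i1 = i] or [rs] is empty. *)
pose M k := eigen_mx a b (t k ^+ j) (t k ^- i1).
have M_stab k : stab_form rs (M k).
  split; first by rewrite det_eigen_mx // mulf_neq0 ?invr_eq0 ?expf_neq0.
  move=> u v; rewrite split_form_eigen_mx // exprVn -!exprM.
  case/orP: a_rs => [a_rs|/nilP rs0]; last first.
    by rewrite /i /j rs0 /= !(muln0, mul0n, expr0, invr1, mul1r).
  have -> : i1 = i by apply/maxn_idPr; rewrite /i -has_count has_pred1.
  by rewrite mulnC mulfV ?mul1r // expf_neq0.
have M_inj : injective M.
  move=> k1 k2 /(congr1 (fun A : 'M[K]_2 => A ord0 ord0 - b * A ord_max ord0)).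
  rewrite !eigen_mx_mu // => /invr_inj/eqP; rewrite -!natrX eqr_nat.
  by move=> /eqP/(expIn i1_gt0) [].
have [k] : exists k, M k \notin Ms.
  set Ns := [seq M k | k <- iota 0 (size Ms).+1].
  have Ns_uniq : uniq Ns by rewrite map_inj_uniq ?iota_uniq.
  have /allPn[_ /mapP[k _ ->] Mk] : ~~ all (mem Ms) Ns.
    apply/negP => /allP/(uniq_leq_size Ns_uniq).
    by rewrite size_map size_iota ltnn.
  by exists k.
by rewrite MsP.
Qed.

Lemma stab_form_infinite (K : numFieldType) (rs : seq K) :
  ~ three_distinct [pred z in rs] ->
  ~ exists Ms : seq 'M[K]_2, forall A, stab_form rs A -> A \in Ms.
Proof.
case: rs => [_|a rs few].
  by apply: (@eigen_family_infinite _ _ 0 1); rewrite // eq_sym oner_neq0.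
have a_rs : (a \in a :: rs) || nilp (a :: rs) by rewrite mem_head.
have [/hasP[b b_rs /= ba]|/hasPn only_a] := boolP (has (predC1 a) rs).
  apply: (eigen_family_infinite (b := b)) a_rs; first by rewrite eq_sym.
  apply/allP => r r_rs; apply: contraT; rewrite negb_or => /andP[ra rb].
  case: few; exists a, b, r; split; last by split; rewrite eq_sym.
  by rewrite /= mem_head r_rs inE b_rs orbT.
apply: (eigen_family_infinite (b := a + 1)) a_rs.
  by rewrite -subr_eq0 opprD addrA subrr add0r oppr_eq0 oner_eq0.
by rewrite /= eqxx; apply/allP => r /only_a /= /negPn ->.
Qed.

Lemma stab_form_finiteP (K : numClosedFieldType) (rs : seq K) :
  (exists Ms : seq 'M[K]_2, forall A, stab_form rs A -> A \in Ms) <->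
  three_distinct [pred z in rs].
Proof.
split; last exact: stab_form_finite.
by move=> finite_stab; apply: NNPP => few; apply: (stab_form_infinite few).
Qed.

Definition pt2 (R : Type) (x y : R) : 'I_2 -> R :=
  fun i => if val i == 0%N then x else y.

Lemma meval_pt2 (R : comNzRingType) (p : {mpoly R[2]}) (x y : R) :
  p.@[pt2 x y] = \sum_(m <- msupp p) p@_m * (x ^+ m ord0 * y ^+ m ord_max).
Proof.
rewrite mevalE; apply: eq_bigr => m _; congr (_ * _).
rewrite !big_ord_recl big_ord0 mulr1 /pt2 /=.
by have -> : lift ord0 (ord0 : 'I_1) = ord_max by apply/val_inj.
Qed.

Lemma mnm2_eq (m1 m2 : 'X_{1..2}) :
  (m1 == m2) = (m1 ord0 == m2 ord0) && (m1 ord_max == m2 ord_max).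
Proof.
apply/eqP/andP => [->|[/eqP e0 /eqP e1]]; first by rewrite !eqxx.
by apply/mnmP => i; case: (ord2P i) => ->.
Qed.

Lemma mpoly2_eq0_meval (K : numFieldType) (p : {mpoly K[2]}) :
  (forall x y, p.@[pt2 x y] = 0) -> p = 0.
Proof.
move=> p0; apply/mpolyP => m; rewrite mcoeff0.
have slice0 y : \sum_(m' <- msupp p | m' ord0 == m ord0)
    p@_m' * y ^+ m' ord_max = 0.
  pose q := \sum_(m' <- msupp p) (p@_m' * y ^+ m' ord_max) *: 'X^(m' ord0).
  have q0 : q = 0.
    apply: poly_eq0_horner => x; rewrite -(p0 x y) meval_pt2 /q horner_sum.
    by apply: eq_bigr => m' _; rewrite hornerZ hornerXn mulrAC mulrA.
  have := congr1 (coefp (m ord0)) q0.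
  by rewrite /= coef_sumMXn coef0 big_mkcondr.
pose q := \sum_(m' <- msupp p | m' ord0 == m ord0) p@_m' *: 'X^(m' ord_max).
have q0 : q = 0.
  apply: poly_eq0_horner => y; rewrite -(slice0 y) /q horner_sum.
  by apply: eq_bigr => m' _; rewrite hornerZ hornerXn.
have := congr1 (coefp (m ord_max)) q0; rewrite /= coef_sumMXn coef0.
under eq_bigl => m' do rewrite -mnm2_eq.
have [mp|/memN_msupp_eq0 //] := boolP (m \in msupp p).
rewrite big_mkcond (bigD1_seq m) ?msupp_uniq //= eqxx big1 ?addr0 //.
by move=> m' /negPf ->.
Qed.

Lemma meval_gl2_act (A : 'M[CC]_2) (p : {mpoly CC[2]}) (x y : CC) :
  (gl2_act A p).@[pt2 x y] =
  p.@[pt2 (A ord0 ord0 * x + A ord0 ord_max * y)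
          (A ord_max ord0 * x + A ord_max ord_max * y)].
Proof.
rewrite /gl2_act comp_mpoly_meval; apply: meval_eq => i.
by case: (ord2P i) => -> /=; rewrite mevalD !mevalZ !mevalXU.
Qed.

Section WeightEnumerator.
Variables (F : finFieldType) (n : nat) (C : {vspace 'rV[F]_n}).

Lemma wt_le (c : 'rV[F]_n) : (wt c <= n)%N.
Proof. by rewrite /wt; apply: leq_trans (max_card _) _; rewrite card_ord. Qed.

Lemma wt_eq0 (c : 'rV[F]_n) : (wt c == 0)%N = (c == 0).
Proof.
rewrite /wt cards_eq0; apply/eqP/eqP => [supp0|->]; last first.
  by apply/setP => j; rewrite !inE mxE eqxx.
apply/rowP => j; rewrite mxE; apply/eqP/negPn.
by rewrite -[_ != 0](@in_set _ (fun j => c ord0 j != 0)) supp0 in_set0.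
Qed.

Lemma wt0 : wt (0 : 'rV[F]_n) = 0%N.
Proof. by apply/eqP; rewrite wt_eq0. Qed.

Lemma wenum1_zero_split (R : nzRingType) : wenum1 R C =
  'X^n + \sum_(c : 'rV[F]_n | (c \in C) && (c != 0)) 'X^(n - wt c).
Proof. by rewrite /wenum1 (bigD1 0) ?mem0v //= wt0 subn0. Qed.

Lemma size_wenum1_nonzero (R : nzRingType) :
  (size (\sum_(c : 'rV[F]_n | (c \in C) && (c != 0)) ('X^(n - wt c) : {poly R}))%R
   <= n)%N.
Proof.
apply: leq_trans (size_sum _ _ _) _; apply/bigmax_leqP => c /andP[_ c0].
by rewrite size_polyXn -wt_eq0 in c0 *; have := wt_le c; lia.
Qed.

Lemma wenum1_monic (R : nzRingType) : wenum1 R C \is monic.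
Proof.
rewrite wenum1_zero_split monicE lead_coefDl ?lead_coefXn //.
by rewrite size_polyXn ltnS size_wenum1_nonzero.
Qed.

Lemma size_wenum1 (R : nzRingType) : size (wenum1 R C) = n.+1.
Proof.
by rewrite wenum1_zero_split size_polyDl ?size_polyXn // ltnS size_wenum1_nonzero.
Qed.

Lemma map_wenum1 (K : numFieldType) :
  wenum1 K C = map_poly (ratr : rat -> K) (wenum1 rat C).
Proof.
by rewrite /wenum1 raddf_sum; apply: eq_bigr => c _; symmetry; apply: map_polyXn.
Qed.

Lemma root_wenum1_Aint (z : algC) : root (wenum1 algC C) z -> z \in Aint.
Proof.
move/root_monic_Aint; apply; first exact: wenum1_monic.
apply/polyOverP => i.
by rewrite /wenum1 coef_sum rpred_sum // => c _; rewrite coefXn rpred_nat.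
Qed.

Lemma three_distinct_root_wenum1 :
  three_distinct (root (wenum1 algC C)) <-> three_distinct (root (wenum1 CC C)).
Proof.
have q0 : wenum1 rat C != 0 by apply/monic_neq0/wenum1_monic.
by rewrite map_wenum1 (map_wenum1 CC) !three_distinct_map_ratr.
Qed.

Variable rs : seq CC.
Hypothesis wenum1E : wenum1 CC C = \prod_(r <- rs) ('X - r%:P).

Lemma size_roots_wenum1 : size rs = n.
Proof. by have := size_wenum1 CC; rewrite wenum1E size_prod_XsubC => -[]. Qed.

Lemma meval_wenum2 x y : (wenum2 CC C).@[pt2 x y] = split_form rs x y.
Proof.
rewrite /wenum2 raddf_sum /=.
under eq_bigr => c _ do rewrite mevalM !rmorphXn /= !mevalXU /=.
have [->|y0] := eqVneq y 0.
  rewrite (bigD1 0) ?mem0v //= wt0.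
  rewrite big1 => [|c /andP[_]]; last first.
    by rewrite -wt_eq0 expr0n => /negPf->; rewrite mulr0.
  by rewrite split_form_v0 size_roots_wenum1 subn0 expr0 mulr1 addr0.
transitivity (y ^+ n * (wenum1 CC C).[x / y]).
  rewrite /wenum1 horner_sum mulr_sumr; apply: eq_bigr => c _.
  rewrite hornerXn -[in y ^+ n](subnK (wt_le c)) exprD expr_div_n mulrAC.
  by rewrite mulrCA mulfV ?expf_neq0 // mulr1.
rewrite wenum1E horner_prod -size_roots_wenum1 -prodr_const_seq -big_split /=.
by apply: eq_bigr => r _; rewrite hornerXsubC mulrBr mulrCA divff // mulr1 mulrC.
Qed.

Lemma in_stab_wenum2 A : in_stab (wenum2 CC C) A <-> stab_form rs A.
Proof.
split=> [[unitA stabA]|[detA stabA]].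
  split=> [|u v]; first by rewrite -unitfE -unitmxE.
  have := congr1 (meval (pt2 u v)) stabA.
  by rewrite /= meval_gl2_act !meval_wenum2.
split; first by rewrite unitmxE unitfE.
apply/eqP; rewrite -subr_eq0; apply/eqP/mpoly2_eq0_meval => x y.
by rewrite mevalB meval_gl2_act !meval_wenum2 stabA subrr.
Qed.

End WeightEnumerator.

Theorem theorem4p2 (F : finFieldType) (n : nat) (C : {vspace 'rV[F]_n}) :
  stab_finite (wenum2 CC C) <->
  exists z1 z2 z3 : algC,
    [/\ [/\ z1 \in Aint, z2 \in Aint & z3 \in Aint],
        [/\ root (wenum1 algC C) z1, root (wenum1 algC C) z2
          & root (wenum1 algC C) z3] &
        [/\ z1 != z2, z1 != z3 & z2 != z3]].
Proof.
have [rs wenum1E] : exists rs, wenum1 CC C = \prod_(r <- rs) ('X - r%:P).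
  have [rs ->] := closed_field_poly_normal (wenum1 CC C).
  by exists rs; rewrite (monicP (wenum1_monic _ _)) scale1r.
transitivity (three_distinct (root (wenum1 algC C))).
  rewrite three_distinct_root_wenum1 wenum1E.
  rewrite (eq_three_distinct (root_prod_XsubC_pred rs)) -stab_form_finiteP.
  by split=> -[Ms MsP]; exists Ms => A /(in_stab_wenum2 wenum1E) /MsP.
split=> [[z1 [z2 [z3 [roots distinct]]]]|[z1 [z2 [z3 [_ roots distinct]]]]].
  have [r1 r2 r3] := roots.
  by exists z1, z2, z3; split=> //; split; apply: (root_wenum1_Aint (C := C)).
by exists z1, z2, z3.
Qed.
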